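(* Let $q=p^f$ be a prime power and $N>2$ an integer with $N\mid(q-1)$. Let $\gamma$ be a primitive element of $\mathbb{F}_q$, $C_0=\langle\gamma^N\rangle$, and let $\eta_a=\sum_{x\in\gamma^aC_0}\psi(x)$, $0\le a\le N-1$. Assume the $\eta_a$ take exactly three rational values $\alpha_1,\alpha_2,\alpha_3$ in arithmetic progression, with $\alpha_1-\alpha_2=-t<0$ and $\alpha_3-\alpha_2=t>0$. Let $Z_N=\mathbb{F}_q^*/C_0$ with generator $\bar\gamma=\gamma C_0$, and $I_i=\{\bar\gamma^a\in Z_N:\eta_a=\alpha_i\}$, $i=1,2,3$. Then $I_1-I_3$ generates a circulant weighing matrix $\mathbf{CW}(N,q/t^2)$ if and only if $q$ is a square and $\alpha_2=(\sqrt q-1)/N$.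
   Context: $\psi$ is the canonical additive character of $\mathbb{F}_q$: $\psi(x)=\xi_p^{\mathrm{Tr}_{q/p}(x)}$. A circulant weighing matrix $\mathbf{CW}(N,w)$ is an $N\times N$ circulant matrix $M$ with entries in $\{-1,0,1\}$ satisfying $MM^\top=wI$. The element $I_1-I_3$ of the group ring $\mathbb{Z}[Z_N]$ (subsets identified with the sums of their elements) generates the circulant matrix with first row $(a_0,\dots,a_{N-1})$, where $a_i=1$ if $\bar\gamma^i\in I_1$, $a_i=-1$ if $\bar\gamma^i\in I_3$, and $a_i=0$ otherwise; it generates a $\mathbf{CW}(N,w)$ exactly when $(I_1-I_3)(I_1-I_3)^{(-1)}=w\cdot 1$ in $\mathbb{Z}[Z_N]$, where $(\sum a_gg)^{(-1)}=\sum a_gg^{-1}$. *)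

From HB Require Import structures.
From mathcomp Require Import all_boot all_order all_algebra all_field.
Set Implicit Arguments. Unset Strict Implicit. Unset Printing Implicit Defensive.
Import Order.TTheory GRing.Theory Num.Theory.
Local Open Scope ring_scope.

Definition trace_p (F : finFieldType) (p f : nat) (x : F) : F :=
  \sum_(i < f) x ^+ (p ^ i).

(* The integer k in {0,..,p-1} with Tr(x) = k (the trace lies in F_p). *)
Definition tr_nat (F : finFieldType) (p f : nat) (x : F) : nat :=
  find (fun k : nat => (k%:R : F) == trace_p p f x) (iota 0 p).

Definition psi (F : finFieldType) (p f : nat) (xi : algC) (x : F) : algC :=
  xi ^+ tr_nat p f x.

(* x belongs to the coset gamma^a C_0, where C_0 = <gamma^N> has order (q-1)/N. *)
Definition in_coset (F : finFieldType) (g : F) (N a : nat) (x : F) : bool :=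
  [exists k : 'I_((#|F|.-1) %/ N), x == g ^+ (a + N * k)].

Definition gperiod (F : finFieldType) (p f : nat) (xi : algC) (g : F) (N a : nat) : algC :=
  \sum_(x : F | in_coset g N a x) psi p f xi x.

(* Coefficient sequence of I_1 - I_3 w.r.t. gamma-bar^a, a = 0..N-1. *)
Definition wseq (e : nat -> algC) (al1 al3 : algC) (a : nat) : algC :=
  if e a == al1 then 1 else if e a == al3 then -1 else 0.

Definition circ_mx (N : nat) (a : nat -> algC) : 'M[algC]_N :=
  \matrix_(i < N, j < N) a ((j + N - i) %% N)%N.

Definition is_CW (N : nat) (w : algC) (M : 'M[algC]_N) : Prop :=
  (forall i j, M i j \in [:: 0; 1; -1]) /\ M *m M^T = w%:M.

From Pilot Require Import Defs.
From HB Require Import structures.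
From mathcomp Require Import all_boot all_order all_algebra all_field zify ring.
Set Implicit Arguments. Unset Strict Implicit. Unset Printing Implicit Defensive.
Import Order.TTheory GRing.Theory Num.Theory.
Local Open Scope ring_scope.

(* Write e_a = al2 - t w_a, where w is the 0/1/-1 sequence of I_1 - I_3.  Summing the
   Gauss periods gives t (sum_a w_a) = N al2 + 1, and the classical formula
   sum_c e_c e_(c+b) = q [-1 in C_b] - (q - 1)/N turns into
   N t^2 A_b = N q [-1 in C_b] + (N al2 + 1)^2 - q for the periodic autocorrelation A of w.
   Hence I_1 - I_3 generates a CW(N, q/t^2) iff (N al2 + 1)^2 = q: for N > 2 some b differs
   from 0 and from the class of -1, and conversely A_0 > 0 forces -1 into C_0.
   As al2 is a rational algebraic integer, N al2 + 1 = +-s with q = s^2.  The sign - is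
   impossible: it forces N | s + 1, so the multiplicative group of the subfield F_s lies in C_0,
   and averaging e_a over it gives (s - 1) e_a >= -(q - 1)/N, i.e. e_a >= al2, for every a,
   contradicting al1 = al2 - t. *)

Section AdditiveCharacter.
Variables (F : finFieldType) (p f : nat) (xi : algC).
Hypotheses (p_pr : prime p) (pcharF : p \in [pchar F]) (cardF : #|F| = (p ^ f)%N)
  (xi_prim : p.-primitive_root xi).

Local Notation tr := (trace_p p f).
Local Notation psi := (@psi F p f xi).

Let f_gt0 : (0 < f)%N.
Proof. by move: (finNzRing_gt1 F); rewrite cardF; case: (f). Qed.

Lemma pchar_nat_expn i : [pchar F].-nat (p ^ i)%N.
Proof. by rewrite pnatX pnatE // pcharF. Qed.

Lemma trace_pD (x y : F) : tr (x + y) = tr x + tr y.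
Proof.
rewrite /trace_p -big_split /=; apply: eq_bigr => i _.
by rewrite exprDn_pchar // pchar_nat_expn.
Qed.

Lemma natr_eq_pchar_mod a b : (a%:R : F) = b%:R -> a = b %[mod p].
Proof.
move=> E; apply/eqP; case: (leqP a b) => [le_ab|/ltnW le_ba].
  by rewrite eq_sym eqn_mod_dvd // (dvdn_pcharf pcharF) natrB // E subrr.
by rewrite eqn_mod_dvd // (dvdn_pcharf pcharF) natrB // E subrr.
Qed.

Lemma pFrobenius_fixed_natr (y : F) : y ^+ p = y -> exists2 k, (k < p)%N & (k%:R : F) = y.
Proof.
move=> yp.
pose S := [set z : F | z ^+ p == z].
pose K := [set (val k)%:R | k : 'I_p] : {set F}.
have cardK : #|K| = p.
  rewrite card_imset ?card_ord // => k1 k2 /natr_eq_pchar_mod.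
  by rewrite !modn_small ?ltn_ord // => /val_inj.
have KS : K \subset S.
  by apply/subsetP => _ /imsetP [k _ ->]; rewrite inE -pFrobenius_autE pFrobenius_aut_nat.
have cardS : (#|S| <= p)%N.
  have sizeP : size ('X^p - 'X : {poly F}) = p.+1.
    by rewrite size_polyDl ?size_polyXn // size_polyN size_polyX ltnS prime_gt1.
  have nzP : ('X^p - 'X : {poly F}) != 0 by rewrite -size_poly_eq0 sizeP.
  rewrite -ltnS -sizeP cardE; apply: max_poly_roots nzP _ (enum_uniq _).
  by apply/allP => z; rewrite mem_enum inE /root !hornerE subr_eq0.
have /eqP KeS : K == S by rewrite eqEcard KS cardK cardS.
have : y \in K by rewrite KeS inE yp.
by case/imsetP => k _ ->; exists k.
Qed.

Lemma trace_p_frobenius (x : F) : tr x ^+ p = tr x.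
Proof.
rewrite /trace_p -(pFrobenius_autE pcharF) rmorph_sum /=.
under eq_bigr => i _ do rewrite pFrobenius_autE -exprM -expnSr.
have xq : x ^+ (p ^ f)%N = x by rewrite -cardF expf_card.
move: xq; case: (f) f_gt0 => // f' _ xq.
rewrite big_ord_recr big_ord_recl /= addrC expn0 expr1 xq; congr (_ + _).
Qed.

Lemma tr_natP (x : F) : (tr_nat p f x < p)%N /\ (tr_nat p f x)%:R = tr x.
Proof.
have [k kp Ek] := pFrobenius_fixed_natr (trace_p_frobenius x).
have hs : has (fun k : nat => (k%:R : F) == tr x) (iota 0 p).
  by apply/hasP; exists k; rewrite ?mem_iota ?Ek.
have := nth_find 0 hs; move: hs; rewrite has_find size_iota => hs.
by rewrite /tr_nat nth_iota ?add0n // => /eqP.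
Qed.

(* The trace is a polynomial of degree p^(f-1) < #|F|, so it cannot vanish on all of F. *)
Lemma trace_p_neq0 : exists x : F, tr x != 0.
Proof.
move: cardF; case: (f) f_gt0 => // f' _ cF.
pose T : {poly F} := \sum_(i < f'.+1) 'X^(p ^ i).
have TE x : T.[x] = trace_p p f'.+1 x.
  by rewrite /T horner_sum; apply: eq_bigr => i _; rewrite hornerXn.
have T_neq0 : T != 0.
  apply/eqP => /(congr1 (fun q : {poly F} => q`_(p ^ f')%N)).
  rewrite coef0 /T coef_sum (bigD1 ord_max) //= coefXn eqxx big1 ?addr0.
    by move/eqP; rewrite oner_eq0.
  move=> i /eqP ne; rewrite coefXn eqn_exp2l ?prime_gt1 //.
  by case: eqP => // E; case: ne; apply: val_inj.
have sizeT : (size T <= (p ^ f').+1)%N.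
  apply: leq_trans (size_sum _ _ _) _; apply/bigmax_leqP => i _.
  by rewrite size_polyXn ltnS leq_pexp2l ?prime_gt0 // -ltnS.
apply/existsP; rewrite -negb_forall; apply/negP => /forallP Tr0.
have rootsT : all (root T) (enum F).
  by apply/allP => x _; rewrite /root TE -[_ == _]negbK Tr0.
have := max_poly_roots T_neq0 rootsT (enum_uniq _).
rewrite -cardE cF => /leq_trans /(_ sizeT).
by rewrite ltnS leqNgt ltn_exp2l ?prime_gt1 // ltnSn.
Qed.

Lemma psiD (x y : F) : psi (x + y) = psi x * psi y.
Proof.
rewrite /Defs.psi -exprD -(prim_expr_mod xi_prim) -[in RHS](prim_expr_mod xi_prim).
have [_ Ex] := tr_natP x; have [_ Ey] := tr_natP y; have [_ Exy] := tr_natP (x + y).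
by congr (_ ^+ _); apply: natr_eq_pchar_mod; rewrite Exy natrD Ex Ey trace_pD.
Qed.

Lemma psi0 : psi 0 = 1.
Proof.
have xi_neq0 : xi != 0.
  apply/eqP => xi0; move: (prim_expr_order xi_prim).
  by rewrite xi0 expr0n gtn_eqF ?prime_gt0 //=; apply/eqP; rewrite eq_sym oner_eq0.
have : psi 0 != 0 by rewrite expf_neq0.
by move/mulfI; apply; rewrite -psiD !addr0 mulr1.
Qed.

Lemma psi_nontrivial : exists x : F, psi x != 1.
Proof.
have [x trx] := trace_p_neq0; exists x.
have [lt_p Ex] := tr_natP x.
rewrite -(prim_order_dvd xi_prim); apply: contra trx => /dvdnP [[|k] Ek].
  by rewrite -Ex Ek.
by move: lt_p; rewrite Ek mulSn ltnNge leq_addr.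
Qed.

(* The closure hypothesis makes y |-> y0 + y a permutation of A for y0 in A. *)
Lemma sum_psi_addset_eq0 (A : {set F}) (x : F) :
  (forall y z, y \in A -> (y + z \in A) = (z \in A)) ->
  (exists2 y, y \in A & psi (y * x) != 1) -> \sum_(y in A) psi (y * x) = 0.
Proof.
move=> addA [y0 Ay0 nt].
set S := \sum_(y in A) _.
have /eqP : S = psi (y0 * x) * S.
  rewrite /S mulr_sumr (reindex_inj (addrI y0)) /=.
  rewrite (eq_bigl (mem A)) => [|y]; last by rewrite addA.
  by apply: eq_bigr => y _; rewrite mulrDl psiD.
by rewrite -subr_eq0 -{1}[S]mul1r -mulrBl mulf_eq0 subr_eq0 eq_sym (negbTE nt) => /eqP.
Qed.

Lemma sum_psi_addset_ge0 (A : {set F}) (x : F) :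
  (forall y z, y \in A -> (y + z \in A) = (z \in A)) -> 0 <= \sum_(y in A) psi (y * x).
Proof.
move=> addA; have [/existsP [y /andP [Ay nt]]|] := boolP [exists y in A, psi (y * x) != 1].
  by rewrite (sum_psi_addset_eq0 addA) //; exists y.
rewrite negb_exists => /forallP triv.
rewrite (eq_bigr (fun _ => 1)) ?sumr_const ?ler0n // => y Ay.
by move: (triv y); rewrite Ay negbK => /eqP.
Qed.

Lemma sum_psi : \sum_(x : F) psi x = 0.
Proof.
have [x nt] := psi_nontrivial.
have -> : \sum_(x : F) psi x = \sum_(y in [set: F]) psi (y * 1).
  by apply: eq_big => [y|y _]; rewrite ?inE ?mulr1.
apply: sum_psi_addset_eq0 => [y z _|]; first by rewrite !inE.
by exists x; rewrite ?inE ?mulr1.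
Qed.

Lemma sum_psi_mul (v : F) :
  \sum_(x : F | x != 0) psi (x * v) = if v == 0 then (#|F|.-1)%:R else -1.
Proof.
have [->|v_neq0] := eqVneq v 0.
  by under eq_bigr do rewrite mulr0 psi0; rewrite sumr_const cardC1.
transitivity (\sum_(x : F | x != 0) psi x).
  rewrite [RHS](reindex_inj (mulIf v_neq0)) /=; apply: eq_bigl => x.
  by rewrite mulf_eq0 (negbTE v_neq0) orbF.
have := sum_psi; rewrite (bigD1 0) //= psi0 => /eqP; rewrite addrC addr_eq0 => /eqP <-.
by apply: eq_bigl => x.
Qed.

End AdditiveCharacter.

Section Cosets.
Variables (F : finFieldType) (g : F) (N : nat).
Hypotheses (g_prim : (#|F|.-1).-primitive_root g) (N_gt0 : (0 < N)%N)
  (N_dvd : (N %| #|F|.-1)%N).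

Local Notation n := #|F|.-1.
Local Notation C := (in_coset g N).

Lemma prim_expr_surj (x : F) : x != 0 -> exists i : nat, x = g ^+ i.
Proof.
move=> x_neq0; have xn : x ^+ n = 1.
  apply: (mulfI x_neq0); rewrite mulr1 -exprS prednK ?expf_card //.
  by apply/card_gt0P; exists 0.
by have [i ->] := prim_rootP g_prim xn; exists i.
Qed.

Lemma prim_expr_neq0 i : g ^+ i != 0.
Proof.
apply: expf_neq0; apply/eqP => g0; move: (prim_expr_order g_prim) (prim_order_gt0 g_prim).
by rewrite g0 expr0n; case: eqP => [->|_ /eqP] //; rewrite eq_sym oner_eq0.
Qed.

Lemma in_coset_expr a i : (a < N)%N -> C a (g ^+ i) = (i %% N == a)%N.
Proof.
move=> aN; apply/existsP/eqP => [[k]|Ha].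
  rewrite (eq_prim_root_expr g_prim) => /eqP/(congr1 (modn^~ N)).
  by rewrite !modn_dvdm // => ->; rewrite addnC mulnC modnMDl modn_small.
have kL : ((i %% n) %/ N < n %/ N)%N.
  by rewrite ltn_divLR // divnK // ltn_pmod // (prim_order_gt0 g_prim).
exists (Ordinal kL); apply/eqP => /=.
have -> : (a + N * (i %% n %/ N) = i %% n)%N.
  by rewrite [in RHS](divn_eq (i %% n) N) modn_dvdm // Ha addnC mulnC.
by rewrite (prim_expr_mod g_prim).
Qed.

Lemma in_coset0 a : C a 0 = false.
Proof. by apply/existsP => [[k /eqP E]]; move: (prim_expr_neq0 (a + N * k)); rewrite -E eqxx. Qed.

Lemma in_coset_neq0 a x : C a x -> x != 0.
Proof. by apply: contraTneq => ->; rewrite in_coset0. Qed.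

Lemma in_cosetM a b x z : (a < N)%N -> (b < N)%N -> C a x ->
  C ((a + b) %% N)%N (x * z) = C b z.
Proof.
move=> aN bN Cx; have [i Ei] := prim_expr_surj (in_coset_neq0 Cx).
move: Cx; rewrite Ei in_coset_expr // => /eqP Ha.
have [->|/prim_expr_surj [j ->]] := eqVneq z 0; first by rewrite mulr0 !in_coset0.
by rewrite -exprD !in_coset_expr ?ltn_pmod // -modnDml Ha eqn_modDl (modn_small bN).
Qed.

Lemma card_in_coset a : (a < N)%N -> #|[set x | C a x]| = (n %/ N)%N.
Proof.
move=> aN.
have -> : [set x | C a x] = [set g ^+ (a + N * val k)%N | k : 'I_(n %/ N)].
  by apply/setP => x; rewrite inE; apply/existsP/imsetP => [[k /eqP ->]|[k _ ->]]; exists k.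
rewrite card_imset ?card_ord // => k1 k2 /eqP.
have bnd (k : 'I_(n %/ N)) : (a + N * k < n)%N.
  apply: (@leq_trans (N * k.+1)); first by rewrite mulnS ltn_add2r.
  by rewrite -[X in (_ <= X)%N](divnK N_dvd) mulnC leq_mul2r ltn_ord orbT.
rewrite (eq_prim_root_expr g_prim) !modn_small ?bnd // eqn_add2l eqn_pmul2l //.
by move/eqP/val_inj.
Qed.

Lemma sum_in_coset (h : F -> algC) :
  \sum_(c < N) \sum_(x | C c x) h x = \sum_(x | x != 0) h x.
Proof.
under eq_bigr do rewrite big_mkcond.
rewrite exchange_big [RHS]big_mkcond; apply: eq_bigr => x _ /=.
have [->|/prim_expr_surj [i ->]] := eqVneq x 0; first by rewrite big1 // => c _; rewrite in_coset0.
rewrite (bigD1 (Ordinal (ltn_pmod i N_gt0))) //= in_coset_expr ?ltn_pmod // eqxx.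
rewrite big1 ?addr0 // => c /eqP ne; rewrite in_coset_expr //.
by case: eqP => // E; case: ne; apply: val_inj.
Qed.

Lemma in_coset_unique x : x != 0 ->
  exists2 b0, (b0 < N)%N & forall b, (b < N)%N -> C b x = (b == b0).
Proof.
move=> /prim_expr_surj [i ->]; exists (i %% N)%N => [|b bN]; first exact: ltn_pmod.
by rewrite in_coset_expr // eq_sym.
Qed.

(* The group of (n/d)-th roots of unity is generated by g^d, hence lies in C_0 when N | d. *)
Lemma in_coset0_root_unity d x : (N %| d)%N -> (d %| n)%N -> x ^+ (n %/ d) = 1 -> C 0 x.
Proof.
move=> Nd dn xd; have d_gt0 := dvdn_gt0 (prim_order_gt0 g_prim) dn.
have nd_gt0 : (0 < n %/ d)%N by rewrite divn_gt0 // dvdn_leq // (prim_order_gt0 g_prim).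
have x_neq0 : x != 0.
  by apply/eqP => x0; move: xd; rewrite x0 expr0n gtn_eqF // => /eqP; rewrite eq_sym oner_eq0.
have [i Ei] := prim_expr_surj x_neq0.
have : (n %/ d * d %| n %/ d * i)%N.
  by rewrite divnK // mulnC (prim_order_dvd g_prim) exprM -Ei xd.
rewrite dvdn_pmul2l // => di.
by rewrite Ei in_coset_expr //; exact: dvdn_trans Nd di.
Qed.

Lemma card_root_unity_ge m : (m %| n)%N -> (m <= #|[set x : F | x ^+ m == 1%R]|)%N.
Proof.
move=> mn; have n_gt0 : (0 < n)%N := prim_order_gt0 g_prim.
have nm_gt0 : (0 < n %/ m)%N by rewrite divn_gt0 ?(dvdn_gt0 n_gt0 mn) // dvdn_leq.
pose G (j : 'I_m) := g ^+ (n %/ m * j).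
have bnd (j : 'I_m) : (n %/ m * j < n)%N.
  by rewrite -[X in (_ < X)%N](divnK mn) ltn_pmul2l.
have G_inj : injective G.
  move=> j1 j2 /eqP; rewrite /G (eq_prim_root_expr g_prim) !modn_small ?bnd //.
  by rewrite eqn_pmul2l // => /eqP/val_inj.
rewrite -[X in (X <= _)%N]card_ord -(card_imset _ G_inj); apply: subset_leq_card.
apply/subsetP => _ /imsetP [j _ ->]; rewrite inE /G -exprM mulnAC divnK //.
by rewrite exprM (prim_expr_order g_prim) expr1n.
Qed.

End Cosets.

Section Circulant.
Variable N : nat.
Hypothesis N_gt0 : (0 < N)%N.

Lemma sum_shift_mod (V : nmodType) (G : nat -> V) m :
  \sum_(k < N) G ((k + m) %% N)%N = \sum_(c < N) G c.
Proof.
pose h (k : 'I_N) := Ordinal (ltn_pmod (k + m) N_gt0).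
have h_inj : injective h.
  by move=> k1 k2 /(congr1 val) /= /eqP; rewrite eqn_modDr !modn_small // => /eqP/val_inj.
by rewrite [RHS](reindex_inj h_inj).
Qed.

Lemma modn_addBn_eq0 (i j : 'I_N) : ((i + N - j) %% N == 0)%N = (i == j).
Proof.
have iN := ltn_ord i; have jN := ltn_ord j; apply/idP/eqP => [|->]; last first.
  by rewrite addKn modnn.
case: (leqP j i) => ji.
  have -> : (i + N - j = (i - j) + N)%N by lia.
  by rewrite modnDr modn_small => [/eqP E|]; [apply: val_inj => /=; lia | lia].
by rewrite modn_small => [/eqP|]; lia.
Qed.

Definition autocorr (a : nat -> algC) (b : nat) : algC :=
  \sum_(c < N) a c * a ((c + b) %% N)%N.

Lemma circ_mx_mul_tr (a : nat -> algC) (i j : 'I_N) :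
  (circ_mx N a *m (circ_mx N a)^T) i j = autocorr a ((i + N - j) %% N)%N.
Proof.
have iN := ltn_ord i; have jN := ltn_ord j.
rewrite !mxE /autocorr.
rewrite -[RHS](sum_shift_mod (fun c => a c * a ((c + (i + N - j) %% N) %% N)%N) (N - i)).
apply: eq_bigr => k _.
rewrite !mxE /= addnBA ?(ltnW iN) // modnDml modnDmr; congr (_ * a _).
have -> : (k + N - i + (i + N - j) = (k + N - j) + N)%N by lia.
by rewrite modnDr.
Qed.

Lemma is_CW_circ_mxP (w : algC) (a : nat -> algC) :
  is_CW w (circ_mx N a) <->
  (forall c, (c < N)%N -> a c \in [:: 0; 1; -1]) /\
  (forall b, (b < N)%N -> autocorr a b = w *+ (b == 0)%N).
Proof.
split=> [[entries MMt]|[entries acf]].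
  split=> [c cN|b bN].
    by move: (entries (Ordinal N_gt0) (Ordinal cN)); rewrite mxE /= subn0 modnDr modn_small.
  move/matrixP/(_ (Ordinal bN) (Ordinal N_gt0)): MMt.
  by rewrite circ_mx_mul_tr /= subn0 modnDr modn_small // => ->; rewrite mxE.
split=> [i j|]; first by rewrite mxE entries ?ltn_pmod.
apply/matrixP => i j; rewrite circ_mx_mul_tr acf ?ltn_pmod // mxE.
by rewrite modn_addBn_eq0.
Qed.

End Circulant.

Section GaussPeriods.
Variables (F : finFieldType) (p f N : nat) (xi : algC) (g : F).
Hypotheses (p_pr : prime p) (pcharF : p \in [pchar F]) (cardF : #|F| = (p ^ f)%N)
  (xi_prim : p.-primitive_root xi) (g_prim : (#|F|.-1).-primitive_root g)
  (N_gt0 : (0 < N)%N) (N_dvd : (N %| #|F|.-1)%N).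

Local Notation C := (in_coset g N).
Local Notation e := (gperiod p f xi g N).
Local Notation psi := (@psi F p f xi).
Local Notation L := (#|F|.-1 %/ N)%N.

Lemma gperiod_Aint a : e a \in Aint.
Proof. by apply: rpred_sum => x _; apply/rpredX/(Aint_prim_root xi_prim). Qed.

Lemma sum_gperiod : \sum_(c < N) e c = -1.
Proof.
rewrite (sum_in_coset g_prim N_gt0 N_dvd psi).
have := sum_psi_mul p_pr pcharF cardF xi_prim 1; rewrite oner_eq0.
by under eq_bigr do rewrite mulr1.
Qed.

Lemma gperiod_shift c b x : (c < N)%N -> (b < N)%N -> C c x ->
  e ((c + b) %% N)%N = \sum_(z | C b z) psi (x * z).
Proof.
move=> cN bN Cx; rewrite /gperiod (reindex_inj (mulfI (in_coset_neq0 g_prim Cx))) /=.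
by apply: eq_bigl => z; rewrite (in_cosetM g_prim N_gt0 N_dvd z cN bN Cx).
Qed.

(* Expanding the product, the sum over the cosets is a sum of psi(x (1 + z)) over x != 0,
   and the inner sum over x is #|F| - 1 or -1 according as z = -1 or not. *)
Lemma autocorr_gperiod b : (b < N)%N ->
  autocorr N e b = (if C b (-1) then (#|F|)%:R else 0) - L%:R.
Proof.
move=> bN.
transitivity (\sum_(c < N) \sum_(x | C c x) \sum_(z | C b z) psi (x * (1 + z))).
  apply: eq_bigr => c _; rewrite {1}/gperiod mulr_suml; apply: eq_bigr => x Cx.
  rewrite (gperiod_shift (ltn_ord c) bN Cx) mulr_sumr; apply: eq_bigr => z _.
  by rewrite mulrDr mulr1 (psiD p_pr pcharF cardF xi_prim).
rewrite (sum_in_coset g_prim N_gt0 N_dvd (fun x => \sum_(z | C b z) psi (x * (1 + z)))).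
rewrite exchange_big /=.
transitivity (\sum_(z | C b z) ((if z == -1 then (#|F|%:R : algC) else 0) - 1)).
  apply: eq_bigr => z _; rewrite (sum_psi_mul p_pr pcharF cardF xi_prim) addrC addr_eq0.
  case: eqP => _; last by rewrite add0r.
  by rewrite -subn1 natrB //; apply/card_gt0P; exists 0.
rewrite sumrB -big_mkcondr /=; congr (_ - _).
  case Cm: (C b (-1)).
    rewrite (eq_bigl (fun z => z == -1)) ?big_pred1_eq // => z.
    by case: eqP => [->|]; rewrite ?Cm ?andbF.
  by rewrite big_pred0 // => z; case: eqP => [->|]; rewrite ?Cm ?andbF.
rewrite (eq_bigl (fun z => z \in [set x | C b x])); last by move=> z; rewrite inE.
by rewrite sumr_const (card_in_coset g_prim N_gt0 N_dvd bN).
Qed.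

(* Multiplication by the nonzero elements of A permutes C_a, so
   #|A^*| e_a = sum_(x in C_a) (sum_(y in A) psi (y x) - 1), and the inner sums are >= 0. *)
Lemma gperiod_addset_lower_bound (A : {set F}) a :
  (forall y z, y \in A -> (y + z \in A) = (z \in A)) -> 0 \in A ->
  (forall y, y \in A :\ 0 -> C 0 y) -> (a < N)%N ->
  - (L%:R) <= #|A :\ 0|%:R * e a.
Proof.
move=> addA A0 AC0 aN.
have -> : #|A :\ 0|%:R * e a = \sum_(x | C a x) (\sum_(y in A) psi (y * x) - 1).
  transitivity (\sum_(y in A :\ 0) \sum_(x | C a x) psi (y * x)).
    rewrite mulr_natl -sumr_const; apply: eq_bigr => y Ay.
    have y_neq0 : y != 0 by move: Ay; rewrite in_setD1 => /andP [].
    rewrite /gperiod (reindex_inj (mulfI y_neq0)) /=; apply: eq_bigl => x.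
    by rewrite -(in_cosetM g_prim N_gt0 N_dvd x N_gt0 aN (AC0 y Ay)) add0n modn_small.
  rewrite exchange_big /=; apply: eq_bigr => x _.
  rewrite (bigD1 0 A0) /= mul0r (psi0 p_pr pcharF cardF xi_prim) addrC addrK.
  by apply: eq_bigl => y; rewrite in_setD1 andbC.
rewrite sumrB ler_wpDl ?sumr_ge0 // => [x _|]; first exact: sum_psi_addset_ge0.
rewrite (eq_bigl (fun z => z \in [set x | C a x])); last by move=> z; rewrite inE.
by rewrite sumr_const (card_in_coset g_prim N_gt0 N_dvd aN).
Qed.

(* For #|F| = s^2, the subfield F_s = {y | y^s = y} is an additive subgroup whose nonzero
   elements, the (s-1)-th roots of unity, lie in C_0 when N divides s + 1. *)
Lemma gperiod_subfield_lower_bound s a :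
  #|F| = (s ^ 2)%N -> (N %| s.+1)%N -> (a < N)%N ->
  exists2 h : nat, (s.-1 <= h)%N & - (L%:R) <= h%:R * e a.
Proof.
move=> qs Ns aN.
have s_gt1 : (1 < s)%N by move: (finNzRing_gt1 F); rewrite qs; case: (s) => [|[]].
have s_gt0 := ltnW s_gt1.
have [k _ sk] : exists2 k, (k <= f)%N & s = (p ^ k)%N.
  by apply/dvdn_pfactor => //; rewrite -cardF qs dvdn_exp.
have n_eq : #|F|.-1 = (s.-1 * s.+1)%N by rewrite qs; case: (s) s_gt0 => // s' _; nia.
have ns : (#|F|.-1 %/ s.+1 = s.-1)%N by rewrite n_eq mulnK.
pose A := [set y : F | y ^+ s == y].
have addA y z : y \in A -> (y + z \in A) = (z \in A).
  rewrite !inE => /eqP ys; rewrite sk exprDn_pchar ?(pchar_nat_expn p_pr pcharF) // -sk ys.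
  by rewrite (inj_eq (addrI y)).
have A0 : 0 \in A by rewrite inE expr0n gtn_eqF.
have roots_sub : [set y : F | y ^+ s.-1 == 1] \subset A :\ 0.
  apply/subsetP => y; rewrite !inE => /eqP y1.
  have y_neq0 : y != 0.
    apply/eqP => y0; move: y1; rewrite y0 expr0n gtn_eqF ?ltn_predRL // => /eqP.
    by rewrite eq_sym oner_eq0.
  by rewrite y_neq0 -(prednK s_gt0) exprS y1 mulr1 eqxx.
have AC0 y : y \in A :\ 0 -> C 0 y.
  rewrite !inE => /andP [y_neq0 /eqP ys].
  apply: (in_coset0_root_unity g_prim N_gt0 N_dvd Ns); first by rewrite n_eq dvdn_mull.
  apply: (mulfI y_neq0); rewrite ns mulr1 -exprS prednK //.
exists #|A :\ 0|; last exact: gperiod_addset_lower_bound.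
apply: leq_trans (subset_leq_card roots_sub).
by apply: (card_root_unity_ge g_prim); rewrite n_eq dvdn_mulr.
Qed.

End GaussPeriods.

Lemma wseq_mem (e : nat -> algC) al1 al3 c : wseq e al1 al3 c \in [:: 0; 1; -1].
Proof. by rewrite /wseq; case: ifP => _; [|case: ifP => _]; rewrite !inE eqxx ?orbT. Qed.

Section ThreeValuedPeriods.
Variables (F : finFieldType) (p f N : nat) (xi : algC) (g : F) (al1 al2 t : algC).
Hypotheses (p_pr : prime p) (pcharF : p \in [pchar F]) (cardF : #|F| = (p ^ f)%N)
  (xi_prim : p.-primitive_root xi) (g_prim : (#|F|.-1).-primitive_root g)
  (N_gt2 : (2 < N)%N) (N_dvd : (N %| #|F|.-1)%N).
Hypotheses (al12 : al1 - al2 = - t) (t_gt0 : 0 < t).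

Local Notation C := (in_coset g N).
Local Notation e := (gperiod p f xi g N).
Local Notation q := #|F|.
Local Notation L := (#|F|.-1 %/ N)%N.

Let N_gt0 : (0 < N)%N := ltn_trans (isT : (0 < 2)%N) N_gt2.

(* N al2 + 1 = -s would give N | s + 1, and then the subfield bound fails at al1 = al2 - t. *)
Lemma mean_neq_neg_sqrt s : q = (s ^ 2)%N -> al2 \in Num.int ->
  (exists2 a, (a < N)%N & e a = al1) -> N%:R * al2 + 1 != - s%:R.
Proof.
move=> qs al2_int [a aN ea]; apply/eqP => r_eq.
have Nal2 : N%:R * (- al2) = s.+1%:R.
  by rewrite mulrN -[N%:R * al2](addrK 1) r_eq -opprD natr1 opprK.
have Ns : (N %| s.+1)%N.
  have /natrP [m m_eq] : - al2 \is a Num.nat.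
    by rewrite natrEint rpredN al2_int -(pmulr_rge0 _ (_ : 0 < N%:R)) ?Nal2 ?ler0n ?ltr0n.
  by move: Nal2; rewrite m_eq -natrM => /eqP; rewrite eqr_nat => /eqP <-; exact: dvdn_mulr.
have [h hs] :=
  gperiod_subfield_lower_bound p_pr pcharF cardF xi_prim g_prim N_gt0 N_dvd qs Ns aN.
rewrite ea -subr_ge0 opprK => bound.
have s_gt1 : (1 < s)%N by move: (finNzRing_gt1 F); rewrite qs; case: (s) => [|[]].
have NL_le : (N * L <= h * s.+1)%N.
  rewrite mulnC divnK // qs -(leq_pmul2r (ltn0Sn s)) in hs *.
  by case: (s) s_gt1 hs => // s'; nia.
have lhs_eq :
    N%:R * (h%:R * al1 + L%:R) = ((N * L)%N%:R - (h * s.+1)%N%:R) - h%:R * N%:R * t.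
  have al1E : al1 = al2 - t by rewrite -al12 addrC subrK.
  transitivity (- (h%:R * (N%:R * - al2)) - h%:R * N%:R * t + N%:R * L%:R).
    by rewrite al1E; ring.
  by rewrite Nal2 !natrM; ring.
have lhs_lt0 : N%:R * (h%:R * al1 + L%:R) < 0.
  rewrite lhs_eq subr_lt0; apply: le_lt_trans (_ : _ <= 0) _; first by rewrite subr_le0 ler_nat.
  by rewrite !mulr_gt0 ?ltr0n ?(leq_trans _ hs) // -ltnS prednK // ltnW.
have lhs_ge0 : 0 <= N%:R * (h%:R * al1 + L%:R) by rewrite mulr_ge0 ?ler0n.
by have := le_lt_trans lhs_ge0 lhs_lt0; rewrite ltxx.
Qed.

Lemma mean_sq_cardP : al2 \in Num.int -> (exists2 a, (a < N)%N & e a = al1) ->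
  (N%:R * al2 + 1) ^+ 2 = q%:R <->
  exists s : nat, q = (s ^ 2)%N /\ al2 = (s%:R - 1) / N%:R.
Proof.
move=> al2_int ex1; have N_neq0 : (N%:R : algC) != 0 by rewrite pnatr_eq0 -lt0n.
split=> [r2|[s [qs ->]]]; last by rewrite mulrC divfK // subrK -natrX qs.
have r_int : N%:R * al2 + 1 \is a Num.int by rewrite rpredD ?rpredM ?rpred_nat ?rpred1.
have /natrP [s s_eq] := natr_norm_int r_int.
have qs : q = (s ^ 2)%N.
  by apply/eqP; rewrite -(eqr_nat algC) natrX -s_eq real_normK ?Rreal_int // r2.
exists s; split=> //.
have := intrEsign r_int; rewrite s_eq; case: (_ < 0) => /= r_eq.
  by have := mean_neq_neg_sqrt qs al2_int ex1; rewrite r_eq expr1 mulN1r eqxx.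
rewrite expr0 mul1r in r_eq.
by apply: (mulfI N_neq0); rewrite [RHS]mulrC divfK // -r_eq addrK.
Qed.

Variable al3 : algC.
Hypothesis al32 : al3 - al2 = t.
Hypothesis e_vals : forall a, (a < N)%N -> [\/ e a = al1, e a = al2 | e a = al3].

Local Notation w := (wseq e al1 al3).

Lemma gperiod_wseq c : (c < N)%N -> e c = al2 - t * w c.
Proof.
have al1E : al1 = al2 - t by rewrite -al12 addrC subrK.
have al3E : al3 = al2 + t by rewrite -al32 addrC subrK.
have t_neq0 : t != 0 by rewrite gt_eqF.
have al31 : (al3 == al1) = false.
  rewrite al1E al3E (inj_eq (addrI al2)) -subr_eq0 opprK -mulr2n mulrn_eq0.
  by rewrite (negbTE t_neq0).
move=> cN; rewrite /wseq; case: (e_vals cN) => ->.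
- by rewrite eqxx mulr1 al1E.
- have al21 : (al2 == al1) = false by rewrite al1E -subr_eq0 subKr (negbTE t_neq0).
  have al23 : (al2 == al3) = false.
    by rewrite al3E eq_sym -subr_eq0 addrAC subrr add0r (negbTE t_neq0).
  by rewrite al21 al23 mulr0 subr0.
- by rewrite al31 eqxx mulrN1 opprK al3E.
Qed.

Lemma sum_wseq : t * \sum_(c < N) w c = N%:R * al2 + 1.
Proof.
have := sum_gperiod p_pr pcharF cardF xi_prim g_prim N_gt0 N_dvd.
rewrite (eq_bigr (fun c : 'I_N => al2 - t * w c)) => [|c _]; last exact: gperiod_wseq.
rewrite sumrB sumr_const card_ord -mulr_sumr => sum_eq.
transitivity (al2 *+ N - (al2 *+ N - t * \sum_(c < N) w c)); first by ring.
by rewrite sum_eq opprK mulr_natl.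
Qed.

Lemma autocorr_wseq b : (b < N)%N ->
  N%:R * (t ^+ 2 * autocorr N w b) =
  N%:R * (if C b (-1) then q%:R else 0) + (N%:R * al2 + 1) ^+ 2 - q%:R.
Proof.
move=> bN.
have shift : \sum_(c < N) w ((c + b) %% N)%N = \sum_(c < N) w c := sum_shift_mod N_gt0 w b.
have expand : autocorr N e b =
    al2 ^+ 2 *+ N - 2 * al2 * (N%:R * al2 + 1) + t ^+ 2 * autocorr N w b.
  rewrite /autocorr (eq_bigr (fun c : 'I_N => al2 ^+ 2 + (- (al2 * t)) * w ((c + b) %% N)%N
      + (- (al2 * t)) * w c + t ^+ 2 * (w c * w ((c + b) %% N)%N))); last first.
    by move=> c _; rewrite !gperiod_wseq ?ltn_pmod //; ring.
  by rewrite !big_split /= sumr_const card_ord -!mulr_sumr shift -sum_wseq; ring.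
have NL : N%:R * L%:R = q%:R - 1 :> algC.
  by rewrite -natrM mulnC divnK // -subn1 natrB //; apply/card_gt0P; exists 0.
have := autocorr_gperiod p_pr pcharF cardF xi_prim g_prim N_gt0 N_dvd bN.
rewrite expand => /(canRL (addKr _)) ->.
(* [ring] cannot treat the conditional as an atom. *)
set X := (if _ then _ else _).
by rewrite -[q%:R](subrK 1) -NL; ring.
Qed.

Lemma autocorr_wseq0_gt0 : (exists2 a, (a < N)%N & e a = al1) -> 0 < autocorr N w 0.
Proof.
move=> [a aN ea]; rewrite /autocorr (bigD1 (Ordinal aN)) //= addn0 (modn_small aN).
rewrite /wseq ea eqxx mulr1 ltr_wpDr // sumr_ge0 // => c _; rewrite addn0 modn_small //.
by case: ifP => _; [|case: ifP => _]; rewrite ?mulrNN ?mulr1 ?mulr0 ?ler01 ?lexx.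
Qed.

Lemma is_CW_wseqP : (exists2 a, (a < N)%N & e a = al1) ->
  is_CW (q%:R / t ^+ 2) (circ_mx N w) <-> (N%:R * al2 + 1) ^+ 2 = q%:R.
Proof.
move=> ex1.
have N_neq0 : (N%:R : algC) != 0 by rewrite pnatr_eq0 -lt0n.
have t2_neq0 : t ^+ 2 != 0 by rewrite expf_neq0 // gt_eqF.
have m1_neq0 : (-1 : F) != 0 by rewrite oppr_eq0 oner_eq0.
have [b0 b0N Cb0] := in_coset_unique g_prim N_gt0 N_dvd m1_neq0.
rewrite is_CW_circ_mxP //; split=> [[_ acf] | r2].
  pose b := if b0 == 1%N then 2%N else 1%N.
  have bN : (b < N)%N by rewrite /b; case: ifP => _; last exact: ltn_trans N_gt2.
  have b_neq0 : b != 0%N by rewrite /b; case: ifP.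
  have b_neqb0 : b != b0 by rewrite /b; case: (eqVneq b0 1%N) => [->|]; rewrite // eq_sym.
  move: (autocorr_wseq bN); rewrite acf // (negbTE b_neq0) Cb0 // (negbTE b_neqb0).
  by rewrite mulr0 mulr0 add0r => /esym/eqP; rewrite subr_eq0 => /eqP.
have acf b : (b < N)%N -> t ^+ 2 * autocorr N w b = if b == b0 then q%:R else 0.
  move=> bN; apply: (mulfI N_neq0); rewrite autocorr_wseq // r2 Cb0 //; ring.
have b00 : b0 = 0%N.
  move: (acf 0%N N_gt0); case: eqP => // _ /eqP; rewrite mulf_eq0 (negbTE t2_neq0) /=.
  by rewrite gt_eqF // autocorr_wseq0_gt0.
split=> [c _|b bN]; first exact: wseq_mem.
apply: (mulfI t2_neq0); rewrite acf // b00 mulrnAr mulrCA divff // mulr1.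
by case: eqP.
Qed.

End ThreeValuedPeriods.

Theorem proposition2p6 (F : finFieldType) (p f N : nat) (xi : algC) (g : F)
    (al1 al2 al3 t : algC) :
  prime p -> p \in [pchar F] -> #|F| = (p ^ f)%N ->
  p.-primitive_root xi ->
  (#|F|.-1).-primitive_root g ->
  (2 < N)%N -> (N %| #|F|.-1)%N ->
  al1 \in Crat -> al2 \in Crat -> al3 \in Crat ->
  al1 - al2 = - t -> al3 - al2 = t -> 0 < t ->
  (forall a, (a < N)%N ->
     [\/ gperiod p f xi g N a = al1, gperiod p f xi g N a = al2 | gperiod p f xi g N a = al3]) ->
  (exists2 a, (a < N)%N & gperiod p f xi g N a = al1) ->
  (exists2 a, (a < N)%N & gperiod p f xi g N a = al2) ->
  (exists2 a, (a < N)%N & gperiod p f xi g N a = al3) ->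
  (is_CW (#|F|%:R / t ^+ 2) (circ_mx N (wseq (gperiod p f xi g N) al1 al3))
   <-> exists s : nat, #|F| = (s ^ 2)%N /\ al2 = (s%:R - 1) / N%:R).
Proof.
move=> p_pr pcharF cardF xi_prim g_prim N_gt2 N_dvd _ al2_rat _ al12 al32 t_gt0 e_vals.
move=> ex1 [a2 _ e_a2] _.
have al2_int : al2 \in Num.int by rewrite -e_a2 Cint_rat_Aint ?gperiod_Aint ?e_a2.
rewrite (is_CW_wseqP p_pr pcharF cardF xi_prim g_prim N_gt2 N_dvd al12 t_gt0 al32 e_vals ex1).
exact: (mean_sq_cardP p_pr pcharF cardF xi_prim g_prim N_gt2 N_dvd al12 t_gt0).
Qed.
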